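(* The cone of (coarse) Hilbert functions of finitely generated squarefree $\mathbb{N}^n$-graded $S$-modules generated in degree zero equals the cone of (coarse) Hilbert functions of Stanley–Reisner rings $\mathbb{k}[\Delta]=S/I_\Delta$ of simplicial complexes $\Delta$ on $[n]$.
   Context: $S=\mathbb{k}[x_1,\dots,x_n]$ with fine $\mathbb{N}^n$-grading. A module $M$ is squarefree if for all $a\in\mathbb{N}^n$ and $i$ with $a_i\neq0$, multiplication by $x_i:M_a\to M_{a+e_i}$ is bijective. The coarse Hilbert function is $H_M(i)=\dim_{\mathbb{k}}\bigoplus_{|a|=i}M_a$. The cone of Hilbert functions of a family of modules is the convex cone in $\mathbb{R}^{\mathbb{N}}$ spanned by their Hilbert functions. *)

From HB Require Import structures.
From mathcomp Require Import all_boot all_order all_algebra.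
From mathcomp Require Import reals.
Set Implicit Arguments. Unset Strict Implicit. Unset Printing Implicit Defensive.
Import Order.TTheory GRing.Theory Num.Theory.
Local Open Scope ring_scope.

(* Fine degrees a in N^n, as finite functions (extensional equality). *)
Notation deg n := {ffun 'I_n -> nat}.

Definition shift (n : nat) (a : deg n) (i : 'I_n) : deg n :=
  [ffun j => (a j + (j == i))%N].

(* Model of a finitely generated N^n-graded S-module generated in degree 0:
   M = S^m / N, where S^m = S(0)^m is free on m generators of degree 0.
   Identifying each graded component (S^m)_a = k^m * x^a with k^m, a graded
   submodule N of S^m is a family of subspaces N_a of k^m (row spaces of
   square matrices) with x_i N_a \subseteq N_{a+e_i}, i.e. N_a <= N_{a+e_i}.
   Then M_a = k^m / N_a, and multiplication by x_i : M_a -> M_{a+e_i} is the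
   map induced by the identity of k^m. *)
Definition graded_submod (k : fieldType) (n m : nat)
  (N : deg n -> 'M[k]_m) : Prop :=
  forall (a : deg n) (i : 'I_n), (N a <= N (shift a i))%MS.

(* Squarefree: for a_i <> 0, x_i : M_a -> M_{a+e_i} is bijective.
   The induced map k^m/N_a -> k^m/N_{a+e_i} is always surjective and is
   injective iff N_{a+e_i} \subseteq N_a. *)
Definition squarefree_quot (k : fieldType) (n m : nat)
  (N : deg n -> 'M[k]_m) : Prop :=
  forall (a : deg n) (i : 'I_n), (0 < a i)%N -> (N (shift a i) <= N a)%MS.

Definition dim_quot (k : fieldType) (n m : nat) (N : deg n -> 'M[k]_m)
  (a : deg n) : nat := (m - \rank (N a))%N.

Definition hilb (k : fieldType) (n m : nat) (N : deg n -> 'M[k]_m)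
  (d : nat) : nat :=
  (\sum_(b : {ffun 'I_n -> 'I_d.+1} | (\sum_(j < n) (b j : nat) == d)%N)
      dim_quot N [ffun j => (b j : nat)])%N.

Definition simplicial_complex (n : nat) (D : {set {set 'I_n}}) : Prop :=
  set0 \in D /\ forall F G : {set 'I_n}, F \in D -> G \subset F -> G \in D.

Definition supp (n : nat) (a : deg n) : {set 'I_n} := [set j | (0 < a j)%N].

(* Stanley-Reisner ideal I_D = (x_F : F not in D).  x^a \in I_D iff some
   generator x_F divides x^a, i.e. F \subset supp a.  k[D] = S / I_D is the
   cyclic module S^1 / I_D, whose relation subspace in degree a is all of
   k^1 if x^a \in I_D and 0 otherwise. *)
Definition SR_rel (k : fieldType) (n : nat) (D : {set {set 'I_n}})
  (a : deg n) : 'M[k]_1 :=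
  if [exists F : {set 'I_n}, (F \notin D) && (F \subset supp a)]
  then 1%:M else 0.

Definition cone (R : realType) (P : (nat -> R) -> Prop) (f : nat -> R) : Prop :=
  exists (r : nat) (c : 'I_r -> R) (g : 'I_r -> nat -> R),
    (forall j, 0 <= c j) /\ (forall j, P (g j)) /\
    (forall d, f d = \sum_(j < r) c j * g j d).

(* Over a squarefree module M generated in degree 0, the component M_a depends
   only on the support of a, so its Hilbert series is governed by the antitone
   function F |-> dim M_{e_F} on subsets of [n].  Slicing this function at the
   heights t < dim M_0 gives the simplicial complexes
   Delta_t = {F | t < dim M_{e_F}}, and dim M_a is the number of t with
   supp a in Delta_t, i.e. H_M = sum_t H_{k[Delta_t]}.  Conversely k[Delta] is
   itself such a module. *)
From HB Require Import structures.
From mathcomp Require Import all_boot all_order all_algebra.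
From mathcomp Require Import reals.
From mathcomp Require Import zify.
Set Implicit Arguments. Unset Strict Implicit. Unset Printing Implicit Defensive.
Import Order.TTheory GRing.Theory Num.Theory.
Local Open Scope ring_scope.

Section Cone.
Variable R : realType.
Implicit Types (P Q : (nat -> R) -> Prop) (f : nat -> R).

Lemma cone_ext P f f' : f =1 f' -> cone P f -> cone P f'.
Proof.
move=> eq_f [r [c [g [c_ge0 [Pg def_f]]]]]; exists r, c, g.
by do 2!split=> //; move=> d; rewrite -eq_f.
Qed.

Lemma cone0 P : cone P (fun _ => 0).
Proof.
exists 0%N, (fun _ => 0), (fun _ _ => 0).
by do 2!split=> [[] //|]; move=> d; rewrite big_ord0.
Qed.

Lemma cone_single P h : P h -> cone P h.
Proof.
move=> Ph; exists 1%N, (fun _ => 1), (fun _ => h).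
by do 2!split=> //; move=> d; rewrite big_ord1 mul1r.
Qed.

Lemma coneD P f1 f2 : cone P f1 -> cone P f2 -> cone P (fun d => f1 d + f2 d).
Proof.
move=> [r1 [c1 [g1 [c1_ge0 [Pg1 def_f1]]]]] [r2 [c2 [g2 [c2_ge0 [Pg2 def_f2]]]]].
pose join T (x1 : 'I_r1 -> T) (x2 : 'I_r2 -> T) j :=
  match split j with inl i => x1 i | inr i => x2 i end.
exists (r1 + r2)%N, (join _ c1 c2), (join _ g1 g2).
split=> [j|]; first by rewrite /join; case: (split j).
split=> [j|d]; rewrite /join; first by case: (split j).
rewrite big_split_ord def_f1 def_f2.
congr (_ + _); apply: eq_bigr => i _.
  by rewrite (unsplitK (inl _ i)).
by rewrite (unsplitK (inr _ i)).
Qed.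

Lemma coneZ P (a : R) f : 0 <= a -> cone P f -> cone P (fun d => a * f d).
Proof.
move=> a_ge0 [r [c [g [c_ge0 [Pg def_f]]]]]; exists r, (fun j => a * c j), g.
split=> [j|]; first exact: mulr_ge0.
split=> // d.
by rewrite def_f mulr_sumr; apply: eq_bigr => j _; rewrite mulrA.
Qed.

Lemma cone_sum P r (c : 'I_r -> R) (g : 'I_r -> nat -> R) :
  (forall j, 0 <= c j) -> (forall j, cone P (g j)) ->
  cone P (fun d => \sum_(j < r) c j * g j d).
Proof.
elim: r c g => [|r IH] c g c_ge0 Pg.
  by apply: cone_ext (cone0 P) => d; rewrite big_ord0.
have IHr := IH (fun j => c (widen_ord (leqnSn r) j)) (fun j => g (widen_ord (leqnSn r) j)).
apply: cone_ext (coneD (IHr _ _) (coneZ (c_ge0 ord_max) (Pg ord_max))) => [d||].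
- by rewrite big_ord_recr.
- by move=> j; apply: c_ge0.
- by move=> j; apply: Pg.
Qed.

Lemma cone_sub P Q f : (forall h, P h -> cone Q h) -> cone P f -> cone Q f.
Proof.
move=> PQ [r [c [g [c_ge0 [Pg def_f]]]]].
by apply: cone_ext (cone_sum c_ge0 (fun j => PQ _ (Pg j))) => d; rewrite def_f.
Qed.

End Cone.

Section Degrees.
Variable n : nat.
Implicit Types (a b : deg n) (F : {set 'I_n}).

Lemma sum_shift a i : (\sum_j shift a i j = (\sum_j a j).+1)%N.
Proof.
rewrite (eq_bigr (fun j => a j + (j == i))%N) => [|j _]; last by rewrite ffunE.
rewrite big_split /=; have -> : (\sum_j ((j == i) : nat) = 1)%N; last exact: addn1.
by rewrite (bigD1 i) //= eqxx big1 // => j /negbTE ->.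
Qed.

Lemma deg_down_ind (P : deg n -> Prop) b :
  P b ->
  (forall a j, (a j < b j)%N -> (forall i, a i <= b i)%N -> P (shift a j) -> P a) ->
  forall a, (forall j, a j <= b j)%N -> P a.
Proof.
move=> Pb Pstep a; have [s] := ubnP (\sum_j b j - \sum_j a j)%N.
elim: s a => // s IH a lt_s le_ab.
case: (pickP (fun j => a j < b j)%N) => [j lt_ab | ge_ab]; last first.
  suff -> : a = b by [].
  by apply/ffunP => j; apply/eqP; rewrite eqn_leq le_ab leqNgt ge_ab.
have le_shift_b i : (shift a j i <= b i)%N.
  by rewrite ffunE; case: eqP => [->|_]; rewrite ?addn1 ?addn0.
apply: Pstep lt_ab le_ab (IH _ _ le_shift_b).
have : (\sum_i shift a j i <= \sum_i b i)%N by apply: leq_sum => i _.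
rewrite sum_shift; lia.
Qed.

Definition charvec F : deg n := [ffun j => (j \in F) : nat].

Lemma charvec_supp_le a j : (charvec (supp a) j <= a j)%N.
Proof. by rewrite ffunE inE; case: ltnP. Qed.

Lemma charvec_le F F' : F \subset F' -> forall j, (charvec F j <= charvec F' j)%N.
Proof.
by move=> /subsetP sFF' j; rewrite !ffunE; case: (boolP (j \in F)) => // /sFF' ->.
Qed.

End Degrees.

Section SquarefreeModule.
Variables (k : fieldType) (n m : nat) (N : deg n -> 'M[k]_m).
Hypotheses (gradedN : graded_submod N) (sqfN : squarefree_quot N).
Implicit Types (a b : deg n) (F : {set 'I_n}).

Lemma graded_submod_le a b : (forall j, a j <= b j)%N -> (N a <= N b)%MS.
Proof.
move: a; apply: (deg_down_ind (P := fun a => N a <= N b)%MS) => [|a j _ _].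
  exact: submx_refl.
exact: submx_trans (gradedN a j).
Qed.

Lemma squarefree_quot_le a b : (forall j, a j <= b j)%N ->
  (forall j, 0 < b j -> 0 < a j)%N -> (N b <= N a)%MS.
Proof.
move: a; apply: (deg_down_ind (P := fun a =>
  (forall j, 0 < b j -> 0 < a j)%N -> (N b <= N a)%MS)) => [_|a j lt_ab _ IH pos_a].
  exact: submx_refl.
have a_j_gt0 : (0 < a j)%N by apply: pos_a; lia.
apply: submx_trans (sqfN a_j_gt0); apply: IH => i /pos_a; rewrite ffunE; lia.
Qed.

Definition face_dim F := dim_quot N (charvec F).

Lemma dim_quot_supp a : dim_quot N a = face_dim (supp a).
Proof.
rewrite /face_dim /dim_quot; congr (m - _)%N; apply/eqP; rewrite eqn_leq.
apply/andP; split; apply: mxrankS; last exact/graded_submod_le/charvec_supp_le.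
apply: squarefree_quot_le => [j|j]; first exact: charvec_supp_le.
by rewrite ffunE inE => ->.
Qed.

Lemma face_dim_antitone F F' : F \subset F' -> (face_dim F' <= face_dim F)%N.
Proof.
by move=> sFF'; apply/leq_sub2l/mxrankS/graded_submod_le/charvec_le.
Qed.

Definition layer t : {set {set 'I_n}} := [set F | t < face_dim F]%N.

Lemma layer_down_closed t F F' : F \in layer t -> F' \subset F -> F' \in layer t.
Proof. by rewrite !inE => lt_tF /face_dim_antitone le_FF; apply: leq_trans le_FF. Qed.

Lemma layer_simplicial t : (t < face_dim set0)%N -> simplicial_complex (layer t).
Proof. by move=> lt_t0; split; [rewrite inE | exact: layer_down_closed]. Qed.

End SquarefreeModule.

Section StanleyReisner.
Variables (k : fieldType) (n : nat) (D : {set {set 'I_n}}).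
Implicit Types (a : deg n) (F : {set 'I_n}).

Lemma SR_graded : graded_submod (SR_rel k D).
Proof.
move=> a i; rewrite /SR_rel; case: ifP => [/existsP [F /andP [nDF sFa]] | _].
  rewrite ifT ?submx_refl //; apply/existsP; exists F; rewrite nDF /=.
  apply: subset_trans sFa _; apply/subsetP => j; rewrite !inE ffunE => a_j_gt0.
  by rewrite (leq_trans a_j_gt0) ?leq_addr.
exact: sub0mx.
Qed.

Lemma supp_shift a i : (0 < a i)%N -> supp (shift a i) = supp a.
Proof.
move=> a_i_gt0; apply/setP => j; rewrite !inE ffunE.
by case: eqP => [->|]; rewrite ?addn0 ?addn1.
Qed.

Lemma SR_squarefree : squarefree_quot (SR_rel k D).
Proof. by move=> a i /supp_shift; rewrite /SR_rel => ->. Qed.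

Lemma dim_SR_rel a :
  (forall F F', F \in D -> F' \subset F -> F' \in D) ->
  dim_quot (SR_rel k D) a = (supp a \in D).
Proof.
move=> D_closed; rewrite /dim_quot /SR_rel.
case: ifPn => [/existsP [F /andP [nDF sFa]]|].
  rewrite mxrank1 subnn; case: (boolP (supp a \in D)) => // /D_closed/(_ sFa).
  by rewrite (negPf nDF).
rewrite mxrank0 subn0; case: (boolP (supp a \in D)) => // nDa /existsP [].
by exists (supp a); rewrite nDa subxx.
Qed.

End StanleyReisner.

Lemma sum_ord_ltn p x : (\sum_(t < p) (t < x) = minn x p)%N.
Proof. by elim: p => [|p IH]; rewrite ?big_ord0 ?big_ord_recr /= ?IH; lia. Qed.

Lemma hilb_layer_decomp (k : fieldType) n m (N : deg n -> 'M[k]_m) d :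
  graded_submod N -> squarefree_quot N ->
  hilb N d = (\sum_(t < face_dim N set0) hilb (SR_rel k (layer N t)) d)%N.
Proof.
move=> gradedN sqfN; rewrite /hilb exchange_big /=; apply: eq_bigr => b _.
have le_F0 := face_dim_antitone gradedN (sub0set (supp [ffun j => b j : nat])).
rewrite (dim_quot_supp gradedN sqfN) -(minn_idPl le_F0) -sum_ord_ltn.
apply: eq_bigr => t _; rewrite dim_SR_rel ?inE //.
exact: layer_down_closed.
Qed.

Theorem corollary4p12 (k : fieldType) (R : realType) (n : nat) (f : nat -> R) :
  cone (fun h : nat -> R =>
          exists (m : nat) (N : deg n -> 'M[k]_m),
            graded_submod N /\ squarefree_quot N /\
            forall d, h d = (hilb N d)%:R) f
  <->
  cone (fun h : nat -> R =>
          exists D : {set {set 'I_n}},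
            simplicial_complex D /\
            forall d, h d = (hilb (SR_rel k D) d)%:R) f.
Proof.
split; apply: cone_sub => h.
  move=> [m [N [gradedN [sqfN def_h]]]].
  apply: (@cone_ext _ _ (fun d =>
    \sum_(t < face_dim N set0) 1 * (hilb (SR_rel k (layer N t)) d)%:R)) => [d|].
    rewrite def_h (hilb_layer_decomp _ gradedN sqfN) natr_sum.
    by apply: eq_bigr => t _; rewrite mul1r.
  apply: cone_sum => [t|t]; first exact: ler01.
  apply: cone_single.
  by exists (layer N t); split; [exact: layer_simplicial | move=> d].
move=> [D [_ def_h]]; apply: cone_single; exists 1%N, (SR_rel k D).
by split; [exact: SR_graded | split; [exact: SR_squarefree | exact: def_h]].
Qed.
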